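(* Let $A=\mathbf a\cdot\boldsymbol\sigma$ and $B=\mathbf b\cdot\boldsymbol\sigma$ with $\mathbf a,\mathbf b\in\mathbb{C}^3$, and $q\in\mathbb R$. Then $$AB-qBA=(1-q)(\mathbf a\cdot\mathbf b)\,I+i(1+q)(\mathbf a\times\mathbf b)\cdot\boldsymbol\sigma,$$ $$\|AB-qBA\|_F^2=2\big((1-q)^2|\mathbf a\cdot\mathbf b|^2+(1+q)^2|\mathbf a\times\mathbf b|^2\big),$$ and $\|AB-qBA\|_F^2\le (1+q^2)\|A\|_F^2\|B\|_F^2$.
   Context: $\sigma_1,\sigma_2,\sigma_3$ are the Pauli matrices, $\mathbf r\cdot\boldsymbol\sigma=\sum_{i=1}^3 r_i\sigma_i$, $\mathbf a\cdot\mathbf b=\sum_i a_ib_i$ (bilinear, no conjugation), $\mathbf a\times\mathbf b$ is the (bilinear) cross product, $|\cdot|$ is the Hermitian norm on $\mathbb{C}^3$, $I$ is the $2\times2$ identity, and $\|X\|_F=\sqrt{\operatorname{tr}(XX^\dagger)}$ is the Frobenius norm. *)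

From HB Require Import structures.
From mathcomp Require Import all_boot all_order all_algebra.
From mathcomp Require Import complex.
Set Implicit Arguments. Unset Strict Implicit. Unset Printing Implicit Defensive.
Import Order.TTheory GRing.Theory Num.Theory.
Local Open Scope ring_scope.
Local Open Scope complex_scope.

Section Pauli.
Variable R : rcfType.
Local Notation C := R[i].

(* Pauli matrices sigma_1, sigma_2, sigma_3, indexed by 'I_3 (0,1,2). *)
Definition pauli (k : 'I_3) : 'M[C]_2 :=
  \matrix_(r < 2, c < 2)
    if val k == 0%N then (if r == c then 0 else 1)
    else if val k == 1%N then
      (if r == c then 0 else if val r == 0%N then - (Complex 0 1) else Complex 0 1)
    else (if r == c then (if val r == 0%N then 1 else -1) else 0).

Definition dot_sigma (v : 'I_3 -> C) : 'M[C]_2 :=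
  \sum_(k < 3) v k *: pauli k.

(* bilinear dot product (no conjugation) *)
Definition bdot (a b : 'I_3 -> C) : C := \sum_(k < 3) a k * b k.

Definition bcross (a b : 'I_3 -> C) : 'I_3 -> C :=
  fun k => let i0 := (0 : 'I_3) in let i1 := (1 : 'I_3) in let i2 := (2 : 'I_3) in
    if val k == 0%N then a i1 * b i2 - a i2 * b i1
    else if val k == 1%N then a i2 * b i0 - a i0 * b i2
    else a i0 * b i1 - a i1 * b i0.

Definition cabs (z : C) : R := ComplexField.Normc.normc z.

Definition hnorm (v : 'I_3 -> C) : R := Num.sqrt (\sum_(k < 3) cabs (v k) ^+ 2).

Definition adjmx (n : nat) (X : 'M[C]_n) : 'M[C]_n := map_mx conjc X^T.

(* Frobenius norm ||X||_F = sqrt(tr(X X^dagger)); tr(X X^dagger) is real >= 0,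
   so we take the square root of its real part. *)
Definition frob (n : nat) (X : 'M[C]_n) : R :=
  Num.sqrt (complex.Re (\tr (X *m adjmx X))).

End Pauli.

Definition iC (R : rcfType) : R[i] := Complex 0 1.

(* Multiplying out gives the Pauli product rule
   (a.s)(b.s) = (a.b) I + i (a x b).s, and since b.a = a.b, b x a = - a x b,
   AB - qBA = (1-q)(a.b) I + i(1+q)(a x b).s.  For any c, d and v, the entries
   of c I + d v.s are c +- d v_3 and d (v_1 -+ i v_2), so by the parallelogram
   law ||c I + d v.s||_F^2 = 2(|c|^2 + |d|^2 |v|^2); in particular
   ||a.s||_F^2 = 2|a|^2.  The bound then follows from the two complex Lagrange
   identities |a|^2|b|^2 = |a.b|^2 + |a x conj b|^2 = |a.conj b|^2 + |a x b|^2,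
   since (1-q)^2 + (1+q)^2 = 2(1+q^2). *)
From HB Require Import structures.
From mathcomp Require Import all_boot all_order all_algebra.
From mathcomp Require Import complex ring.
Set Implicit Arguments. Unset Strict Implicit. Unset Printing Implicit Defensive.
Import Order.TTheory GRing.Theory Num.Theory.
Local Open Scope ring_scope.
Local Open Scope complex_scope.

Section PauliAlgebra.
Variable R : rcfType.
Local Notation C := R[i].
Implicit Types (z w : C) (a b v : 'I_3 -> C).

Lemma big_ord2 (V : zmodType) (F : 'I_2 -> V) : \sum_(k < 2) F k = F 0 + F 1.
Proof. by rewrite !big_ord_recr big_ord0 /= add0r; congr (F _ + F _); apply/val_inj. Qed.

Lemma big_ord3 (V : zmodType) (F : 'I_3 -> V) : \sum_(k < 3) F k = F 0 + F 1 + F 2.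
Proof.
by rewrite !big_ord_recr big_ord0 /= add0r; congr (F _ + F _ + F _); apply/val_inj.
Qed.

Lemma ord2P (i : 'I_2) : i = 0 \/ i = 1.
Proof. by case: i => [[|[|//]] ?]; [left | right]; apply/val_inj. Qed.

Lemma complexP z w : complex.Re z = complex.Re w -> complex.Im z = complex.Im w -> z = w.
Proof. by case: z w => [? ?] [? ?] /= -> ->. Qed.

(* |z|^2 without the square root of [cabs], so that [ring] applies. *)
Definition normc2 z : R := complex.Re z ^+ 2 + complex.Im z ^+ 2.

Lemma normc2_ge0 z : 0 <= normc2 z.
Proof. by rewrite addr_ge0 ?sqr_ge0. Qed.

Lemma normc2M z w : normc2 (z * w) = normc2 z * normc2 w.
Proof. by case: z w => [x y] [u v]; rewrite /normc2 /=; ring. Qed.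

Lemma normc2_real (x : R) : normc2 x%:C = x ^+ 2.
Proof. by rewrite /normc2 /= expr0n addr0. Qed.

Lemma normc2_iC : normc2 (iC R) = 1.
Proof. by rewrite /normc2 /= expr0n expr1n add0r. Qed.

Lemma sqr_cabs z : cabs z ^+ 2 = normc2 z.
Proof. by case: z => x y; rewrite /cabs /= sqr_sqrtr // addr_ge0 ?sqr_ge0. Qed.

Lemma sqr_hnorm v : hnorm v ^+ 2 = normc2 (v 0) + normc2 (v 1) + normc2 (v 2).
Proof.
rewrite /hnorm sqr_sqrtr; first by rewrite big_ord3 !sqr_cabs.
by apply: sumr_ge0 => k _; rewrite sqr_ge0.
Qed.

Lemma cabs_conj z : cabs z^* = cabs z.
Proof. by case: z => x y; rewrite /cabs /= sqrrN. Qed.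

Lemma hnorm_conj v : hnorm (fun k => (v k)^*) = hnorm v.
Proof. by rewrite /hnorm; under eq_bigr => k _ do rewrite cabs_conj. Qed.

Lemma sqr_frob (X : 'M[C]_2) :
  frob X ^+ 2 = normc2 (X 0 0) + normc2 (X 0 1) + normc2 (X 1 0) + normc2 (X 1 1).
Proof.
have trE : complex.Re (\tr (X *m adjmx X)) =
    normc2 (X 0 0) + normc2 (X 0 1) + normc2 (X 1 0) + normc2 (X 1 1).
  rewrite /mxtrace /adjmx big_ord2 !mxE !big_ord2 !mxE /normc2.
  by move: (X 0 0) (X 0 1) (X 1 0) (X 1 1) => [? ?] [? ?] [? ?] [? ?] /=; ring.
rewrite /frob trE sqr_sqrtr //.
by apply: addr_ge0; [apply: addr_ge0; [apply: addr_ge0|] |]; exact: normc2_ge0.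
Qed.

Lemma dot_sigma_mul a b :
  dot_sigma a *m dot_sigma b = bdot a b *: 1%:M + iC R *: dot_sigma (bcross a b).
Proof.
apply/matrixP => i j.
rewrite /dot_sigma /pauli /bdot /bcross /iC !mxE !big_ord2 !summxE !big_ord3 !mxE /=.
move: (a 0) (a 1) (a 2) (b 0) (b 1) (b 2) => [? ?] [? ?] [? ?] [? ?] [? ?] [? ?].
by case: (ord2P i) => ->; case: (ord2P j) => ->; apply: complexP => /=; ring.
Qed.

Lemma bdotC a b : bdot b a = bdot a b.
Proof. by apply: eq_bigr => k _; rewrite mulrC. Qed.

Lemma dot_sigma_bcrossC a b : dot_sigma (bcross b a) = - dot_sigma (bcross a b).
Proof.
rewrite /dot_sigma -sumrN; apply: eq_bigr => k _; rewrite -scaleNr; congr (_ *: _).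
by rewrite /bcross /=; do 2?case: ifP => _; ring.
Qed.

Lemma dot_sigma_qcommutator a b (q : R) :
  dot_sigma a *m dot_sigma b - q%:C *: (dot_sigma b *m dot_sigma a) =
  ((1 - q)%:C * bdot a b) *: 1%:M + (iC R * (1 + q)%:C) *: dot_sigma (bcross a b).
Proof.
rewrite !dot_sigma_mul (bdotC a b) (dot_sigma_bcrossC a b) scalerN.
rewrite -scalerA [iC R * _]mulrC -scalerA rmorphB rmorphD rmorph1.
rewrite scalerBr !scalerBl !scalerDl !scale1r opprB.
by rewrite [_ - q%:C *: _]addrC addrACA.
Qed.

Lemma frob_scalar_add_dot_sigma (c d : C) v :
  frob (c *: 1%:M + d *: dot_sigma v) ^+ 2 = 2 * (normc2 c + normc2 d * hnorm v ^+ 2).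
Proof.
rewrite sqr_frob sqr_hnorm /normc2 /dot_sigma /pauli !mxE !summxE !big_ord3 !mxE /=.
move: c d (v 0) (v 1) (v 2) => [? ?] [? ?] [? ?] [? ?] [? ?] /=; ring.
Qed.

Lemma sqr_frob_dot_sigma v : frob (dot_sigma v) ^+ 2 = 2 * hnorm v ^+ 2.
Proof.
have -> : dot_sigma v = 0 *: 1%:M + 1 *: dot_sigma v by rewrite scale0r add0r scale1r.
by rewrite frob_scalar_add_dot_sigma normc2_real expr0n add0r normc2_real expr1n mul1r.
Qed.

Lemma lagrange_bdot a b :
  hnorm a ^+ 2 * hnorm b ^+ 2 =
  normc2 (bdot a b) + hnorm (bcross a (fun k => (b k)^*)) ^+ 2.
Proof.
rewrite !sqr_hnorm /normc2 /bdot /bcross big_ord3 /=.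
move: (a 0) (a 1) (a 2) (b 0) (b 1) (b 2) => [? ?] [? ?] [? ?] [? ?] [? ?] [? ?] /=.
ring.
Qed.

Lemma lagrange_bcross a b :
  hnorm a ^+ 2 * hnorm b ^+ 2 =
  normc2 (bdot a (fun k => (b k)^*)) + hnorm (bcross a b) ^+ 2.
Proof.
by rewrite -(hnorm_conj b) lagrange_bdot !sqr_hnorm /bcross /= !conjcK.
Qed.

Lemma normc2_bdot_le a b : normc2 (bdot a b) <= hnorm a ^+ 2 * hnorm b ^+ 2.
Proof. by rewrite lagrange_bdot lerDl sqr_ge0. Qed.

Lemma sqr_hnorm_bcross_le a b : hnorm (bcross a b) ^+ 2 <= hnorm a ^+ 2 * hnorm b ^+ 2.
Proof. by rewrite lagrange_bcross lerDr normc2_ge0. Qed.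

End PauliAlgebra.

Theorem mainTheorem7 (R : rcfType) (a b : 'I_3 -> R[i]) (q : R) :
  let A := dot_sigma a in
  let B := dot_sigma b in
  let M := A *m B - q%:C *: (B *m A) in
  [/\ M = ((1 - q)%:C * bdot a b) *: 1%:M
          + (iC R * (1 + q)%:C) *: dot_sigma (bcross a b),
      frob M ^+ 2 = 2 * ((1 - q) ^+ 2 * cabs (bdot a b) ^+ 2
                         + (1 + q) ^+ 2 * hnorm (bcross a b) ^+ 2)
    & frob M ^+ 2 <= (1 + q ^+ 2) * frob A ^+ 2 * frob B ^+ 2].
Proof.
move=> A B M.
have ME := dot_sigma_qcommutator a b q; rewrite -/A -/B -/M in ME.
have normM : frob M ^+ 2 = 2 * ((1 - q) ^+ 2 * cabs (bdot a b) ^+ 2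
                                + (1 + q) ^+ 2 * hnorm (bcross a b) ^+ 2).
  by rewrite ME frob_scalar_add_dot_sigma sqr_cabs !normc2M normc2_iC !normc2_real mul1r.
split => //; rewrite normM /A /B !sqr_frob_dot_sigma sqr_cabs.
set P := hnorm a ^+ 2 * hnorm b ^+ 2.
have -> : (1 + q ^+ 2) * (2 * hnorm a ^+ 2) * (2 * hnorm b ^+ 2) =
          2 * ((1 - q) ^+ 2 * P + (1 + q) ^+ 2 * P) by rewrite /P; ring.
rewrite ler_pM2l // lerD // ler_wpM2l ?sqr_ge0 //.
- exact: normc2_bdot_le.
- exact: sqr_hnorm_bcross_le.
Qed.
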